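(* Let $n\ge 1$ and let $f:\{0,1\}^n\to\{0,1\}^n$. If $G_f$ is topologically transitive on $(\mathcal{X},d)$, then $G_f$ is regular, i.e. the set of periodic points of $G_f$ is dense in $(\mathcal{X},d)$. In other words, $\mathcal{T}\subset\mathcal{R}$, where $\mathcal{T}$ is the set of maps $f:\{0,1\}^n\to\{0,1\}^n$ with $G_f$ transitive and $\mathcal{R}$ the set of such maps with $G_f$ regular.
   Context: Write $\mathbb{B}=\{0,1\}$ and $\llbracket 1;n\rrbracket=\{1,\dots,n\}$. For $f=(f_1,\dots,f_n):\mathbb{B}^n\to\mathbb{B}^n$, define $F_f(i,x)=(x_1,\dots,x_{i-1},f_i(x),x_{i+1},\dots,x_n)$ for $i\in\llbracket 1;n\rrbracket$, $x\in\mathbb{B}^n$. Let $\mathcal{X}=\llbracket 1;n\rrbracket^{\mathbb{N}}\times\mathbb{B}^n$ and $G_f(s,x)=(\sigma(s),F_f(s_0,x))$ where $\sigma(s)_t=s_{t+1}$. The metric is $d((s,x),(s',x'))=\sum_{i=1}^n|x_i-x'_i|+\frac{9}{n}\sum_{t\in\mathbb{N}}\frac{|s_t-s'_t|}{10^{t+1}}$. $G_f$ is topologically transitive if for all $X,Y\in\mathcal{X}$ and all open balls $B_X,B_Y$ centered at $X,Y$, there exist $X'\in B_X$ and $t\in\mathbb{N}$ with $G_f^t(X')\in B_Y$. A point $X$ is periodic if $G_f^p(X)=X$ for some $p\ge 1$. *)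

From Stdlib Require Import Reals.
From Coquelicot Require Import Coquelicot.
From mathcomp Require Import all_boot.

Set Implicit Arguments.
Unset Strict Implicit.
Unset Printing Implicit Defensive.

(* Indices [1;n] are represented by 'I_n = {0,...,n-1} (shift by one; this
   does not change |s_t - s'_t| in the metric). *)

Definition Bn (n : nat) := {ffun 'I_n -> bool}.

Definition Xspace (n : nat) : Type := ((nat -> 'I_n) * Bn n)%type.

Definition F_f (n : nat) (f : Bn n -> Bn n) (i : 'I_n) (x : Bn n) : Bn n :=
  [ffun j => if j == i then f x j else x j].

Definition G_f (n : nat) (f : Bn n -> Bn n) (X : Xspace n) : Xspace n :=
  (fun t => X.1 t.+1, F_f f (X.1 0%N) X.2).

Definition b2R (b : bool) : R := if b then R1 else R0.

Definition dist_X (n : nat) (X Y : Xspace n) : R :=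
  Rplus
    (\big[Rplus/R0]_(i < n) Rabs (Rminus (b2R (X.2 i)) (b2R (Y.2 i))))
    (Rmult (Rdiv (IZR 9) (INR n))
       (Series (fun t => Rdiv (Rabs (Rminus (INR (nat_of_ord (X.1 t)))
                                           (INR (nat_of_ord (Y.1 t)))))
                              (pow (IZR 10) t.+1)))).

Definition topologically_transitive (n : nat) (g : Xspace n -> Xspace n) : Prop :=
  forall (X Y : Xspace n) (rX rY : R), Rlt R0 rX -> Rlt R0 rY ->
    exists X' : Xspace n, Rlt (dist_X X X') rX /\
      exists t : nat, Rlt (dist_X Y (iter t g X')) rY.

Definition periodic_point (n : nat) (g : Xspace n -> Xspace n) (X : Xspace n) : Prop :=
  exists p : nat, (1 <= p)%N /\ iter p g X = X.

Definition regular (n : nat) (g : Xspace n -> Xspace n) : Prop :=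
  forall (X : Xspace n) (r : R), Rlt R0 r ->
    exists X' : Xspace n, periodic_point g X' /\ Rlt (dist_X X X') r.

(* A distance below 1 forces equal Boolean states, and agreement of the
   strategies on their first k terms makes the distance at most 10^-k.  Given
   (s, x) and r, choose k with 10^-k < r and let y be the state reached from x
   by the first k moves of s.  Transitivity, applied to balls of radius 1
   around (s, y) and (s, x), yields a strategy m and a time t such that m
   drives y back to x in t steps.  Repeating the finite word
   s_0 ... s_(k-1) m_0 ... m_(t-1) forever gives a strategy s' for which
   (s', x) is periodic of period k + t, and it agrees with s for k steps. *)
From Stdlib Require Import Reals.
From mathcomp Require Import all_boot.
From HB Require Import structures.
From Stdlib Require Import Lra FunctionalExtensionality.
From Coquelicot Require Import Coquelicot.

Set Implicit Arguments.
Unset Strict Implicit.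

Local Open Scope R_scope.

Section GeometricDomination.
Variables (q c : R) (a : nat -> R).
Hypotheses (q_ge0 : 0 <= q) (q_lt1 : q < 1).
Hypothesis a_dominated : forall t, 0 <= a t <= c * q ^ t.

Lemma ex_series_geom_dominated : ex_series a.
Proof.
apply: (@ex_series_le _ _ a (fun t => c * q ^ t)).
  by move=> t; have [? ?] := a_dominated t; rewrite /norm /= /abs /= Rabs_pos_eq.
by apply/ex_series_scal_l/ex_series_geom; rewrite Rabs_pos_eq.
Qed.

Lemma Series_geom_dominated_ge0 : 0 <= Series a.
Proof.
have -> : 0 = Series (fun t => 0 * a t) by rewrite Series_scal_l Rmult_0_l.
apply: Series_le ex_series_geom_dominated.
by move=> t; have := a_dominated t; lra.
Qed.

Lemma Series_geom_dominated_tail (k : nat) :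
  (forall t, (t < k)%N -> a t = 0) -> Series a <= c * q ^ k / (1 - q).
Proof.
move=> a_head0.
rewrite (@Series_incr_n_aux a k (fun t ht => a_head0 t (introT ltP ht))).
have -> : c * q ^ k / (1 - q) = Series (fun t => c * q ^ k * q ^ t).
  by rewrite Series_scal_l (is_series_unique _ _ (is_series_geom q _)) ?Rabs_pos_eq.
apply: Series_le; last by apply/ex_series_scal_l/ex_series_geom; rewrite Rabs_pos_eq.
by move=> t; have := a_dominated (k + t)%coq_nat; rewrite pow_add; lra.
Qed.

End GeometricDomination.

#[local] HB.instance Definition _ :=
  Monoid.isComLaw.Build R 0 Rplus (fun a b c => esym (Rplus_assoc a b c))
    Rplus_comm Rplus_0_l.

Lemma big_Rplus_ge_term (n : nat) (F : 'I_n -> R) (i : 'I_n) :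
  (forall j, 0 <= F j) -> F i <= \big[Rplus/R0]_(j < n) F j.
Proof.
move=> F_ge0; rewrite (bigD1 i) //= -{1}[F i]Rplus_0_r.
by apply: Rplus_le_compat_l; apply: big_ind => //; [lra | move=> ? ?; lra].
Qed.

Lemma Rabs_b2R_neq (a b : bool) : a <> b -> Rabs (b2R a - b2R b) = 1.
Proof.
case: a; case: b => //= _.
- by rewrite Rminus_0_r Rabs_R1.
- by rewrite Rminus_0_l Rabs_Ropp Rabs_R1.
Qed.

Lemma strategy_term_bounds (n : nat) (u v : 'I_n) (t : nat) :
  0 <= Rabs (INR u - INR v) / 10 ^ t.+1 <= INR n / 10 * (/ 10) ^ t.
Proof.
have u_lt : INR u < INR n by apply/lt_INR/ltP.
have v_lt : INR v < INR n by apply/lt_INR/ltP.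
have := pos_INR u; have := pos_INR v => v_ge0 u_ge0.
have pow_gt0 : 0 < 10 ^ t.+1 by apply: pow_lt; lra.
have -> : INR n / 10 * (/ 10) ^ t = INR n / 10 ^ t.+1.
  by rewrite pow_inv /=; field; apply: pow_nonzero; lra.
split; first by apply: Rmult_le_pos; [apply: Rabs_pos | apply/Rlt_le/Rinv_0_lt_compat].
by apply/Rmult_le_compat_r; [apply/Rlt_le/Rinv_0_lt_compat | apply: Rabs_le; lra].
Qed.

Lemma dist_X_lt1_state_eq (n : nat) (X Y : Xspace n) : dist_X X Y < 1 -> X.2 = Y.2.
Proof.
rewrite /dist_X => dist_lt1; apply/ffunP => i; apply/eqP/negPn/negP => /eqP neq_i.
have strategy_part_ge0 :
    0 <= 9 / INR n * Series (fun t => Rabs (INR (X.1 t) - INR (Y.1 t)) / 10 ^ t.+1).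
  have n_gt0 : 0 < INR n by apply/lt_0_INR/ltP/(leq_ltn_trans (leq0n i) (ltn_ord i)).
  apply: Rmult_le_pos; first by apply: Rmult_le_pos; [lra | apply/Rlt_le/Rinv_0_lt_compat].
  apply: (@Series_geom_dominated_ge0 (/ 10) (INR n / 10)) => [||t]; try lra.
  exact: strategy_term_bounds.
have : 1 <= \big[Rplus/R0]_(j < n) Rabs (b2R (X.2 j) - b2R (Y.2 j)).
  rewrite -(Rabs_b2R_neq neq_i).
  by apply: big_Rplus_ge_term => j; apply: Rabs_pos.
lra.
Qed.

Lemma dist_X_same_state_le (n : nat) (s s' : nat -> 'I_n) (x : Bn n) (k : nat) :
  (0 < n)%N -> (forall j, (j < k)%N -> s j = s' j) ->
  dist_X (s, x) (s', x) <= (/ 10) ^ k.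
Proof.
move=> n_gt0 eq_head; rewrite /dist_X; cbn [fst snd].
rewrite big1; last by move=> i _; rewrite Rminus_diag Rabs_R0.
have n_gt0R : 0 < INR n by apply/lt_0_INR/ltP.
have tail : Series (fun t => Rabs (INR (s t) - INR (s' t)) / 10 ^ t.+1)
    <= INR n / 10 * (/ 10) ^ k / (1 - / 10).
  apply: Series_geom_dominated_tail => [||t|t t_lt]; try lra.
    exact: strategy_term_bounds.
  by rewrite eq_head // Rminus_diag Rabs_R0 Rdiv_0_l.
have coef_ge0 : 0 <= 9 / INR n by apply: Rmult_le_pos; [lra | apply/Rlt_le/Rinv_0_lt_compat].
have := Rmult_le_compat_l _ _ _ coef_ge0 tail.
have -> : 9 / INR n * (INR n / 10 * (/ 10) ^ k / (1 - / 10)) = (/ 10) ^ k by field; lra.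
lra.
Qed.

Lemma exists_pow_inv10_lt (r : R) : 0 < r -> exists2 k, (0 < k)%N & (/ 10) ^ k < r.
Proof.
move=> r_gt0; have [N powN_lt] := @pow_lt_1_zero (/ 10) ltac:(rewrite Rabs_pos_eq; lra) r r_gt0.
exists N.+1 => //; have := powN_lt N.+1 (le_S _ _ (le_n N)).
by rewrite Rabs_pos_eq //; apply: pow_le; lra.
Qed.

Section Trajectories.
Variables (n : nat) (f : Bn n -> Bn n).

Fixpoint run (s : nat -> 'I_n) (x : Bn n) (t : nat) : Bn n :=
  if t is t'.+1 then run (fun j => s j.+1) (F_f f (s 0%N) x) t' else x.

Lemma iter_G_f (t : nat) (s : nat -> 'I_n) (x : Bn n) :
  iter t (G_f f) (s, x) = (fun j => s (t + j)%N, run s x t).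
Proof.
elim: t s x => [|t IH] s x; first by congr pair; apply: functional_extensionality.
by rewrite iterSr /G_f /= IH; congr pair; apply: functional_extensionality.
Qed.

Lemma eq_run (t : nat) (s s' : nat -> 'I_n) (x : Bn n) :
  (forall j, (j < t)%N -> s j = s' j) -> run s x t = run s' x t.
Proof.
elim: t s s' x => [|t IH] s s' x eq_s //=.
by rewrite eq_s //; apply: IH => j j_lt; apply: eq_s.
Qed.

Lemma runD (a b : nat) (s : nat -> 'I_n) (x : Bn n) :
  run s x (a + b) = run (fun j => s (a + j)%N) (run s x a) b.
Proof.
by elim: a s x => [|a IH] s x //=; rewrite IH.
Qed.

End Trajectories.

Definition cat_strategy (n k : nat) (s m : nat -> 'I_n) (j : nat) : 'I_n :=
  if (j < k)%N then s j else m (j - k)%N.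

Definition periodize (n p : nat) (u : nat -> 'I_n) (j : nat) : 'I_n := u (j %% p)%N.

Lemma periodize_id (n p : nat) (u : nat -> 'I_n) (j : nat) :
  (j < p)%N -> periodize p u j = u j.
Proof. by move=> j_lt; rewrite /periodize modn_small. Qed.

Lemma periodize_periodic_point (n : nat) (f : Bn n -> Bn n) (p : nat)
    (u : nat -> 'I_n) (x : Bn n) :
  (0 < p)%N -> run f (periodize p u) x p = x ->
  periodic_point (G_f f) (periodize p u, x).
Proof.
move=> p_gt0 return_x; exists p; split => //; rewrite iter_G_f return_x.
by congr pair; apply: functional_extensionality => j; rewrite /periodize modnDl.
Qed.

Theorem proposition2 (n : nat) (f : Bn n -> Bn n) :
  (1 <= n)%N ->
  topologically_transitive (G_f f) -> regular (G_f f).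
Proof.
move=> n_gt0 transitive [s x] r r_gt0.
have [k k_gt0 pow_lt_r] := exists_pow_inv10_lt r_gt0.
pose y := run f s x k.
have [[m y'] [near_y [t near_x]]] := transitive (s, y) (s, x) R1 R1 Rlt_0_1 Rlt_0_1.
rewrite iter_G_f in near_x.
have y_eq : y = y' := dist_X_lt1_state_eq near_y; subst y'.
have x_return : x = run f m y t := dist_X_lt1_state_eq near_x.
pose s' := periodize (k + t) (cat_strategy k s m).
have s'_head j : (j < k)%N -> s' j = s j.
  move=> j_lt; rewrite /s' periodize_id; first by rewrite /cat_strategy j_lt.
  exact: leq_trans j_lt (leq_addr _ _).
exists (s', x); split.
  apply: periodize_periodic_point; first by rewrite addn_gt0 k_gt0.
  rewrite runD (eq_run _ _ s'_head) -/y [in RHS]x_return; apply: eq_run => j j_lt.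
  rewrite periodize_id ?ltn_add2l // /cat_strategy.
  by rewrite ltnNge leq_addr /= addKn.
apply: Rle_lt_trans pow_lt_r.
by apply: dist_X_same_state_le => // j j_lt; rewrite s'_head.
Qed.
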